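(* If $x=re^{i\theta}\in C$ and $M_x$ is minimal in the sphere $S^{n+1}(r)$, then $$\|A^E(x)\|^2=\frac{ng}{r^2},\qquad \|A^S(x)\|^2=\frac{n}{r^2}(g-1).$$
   Context: Let $M^n$ be a compact isoparametric hypersurface in the unit sphere $S^{n+1}\subset\mathbb{R}^{n+2}$ (constant principal curvatures) with $g$ distinct principal curvatures; then $g\in\{1,2,3,4,6\}$. Fix $x_0\in M$ and identify the 2-dimensional normal space $\nu_{x_0}M$ of $M$ in $\mathbb{R}^{n+2}$ with $\mathbb{C}$ so that the two focal submanifolds $M_+$, $M_-$ ($\dim M_+\le\dim M_-$) meet the normal circle at $1$ and $e^{i\pi/g}$ (the intersection points closest to $x_0$). The Weyl chamber is $C=\{re^{i\theta}:r>0,\ 0<\theta<\pi/g\}$. For $k=1,\dots,g$ let $\theta_k=k\pi/g-\pi/2$, $\alpha_k=e^{i\theta_k}$, and $m_k=m_1$ for $k$ odd, $m_k=m_2$ for $k$ even, where $(m_1,m_2)$, $m_1\le m_2$, is the multiplicity data of the principal curvatures; $m_1=m_2$ if $g$ is odd, and $(m_1+m_2)g=2n$. For $x\in C$, $M_x=\{p+\tilde\xi(p):p\in M\}$ where $\tilde\xi$ is the parallel normal field on $M$ with $\tilde\xi(x_0)=x-x_0$; it is an $n$-dimensional isoparametric submanifold of $\mathbb{R}^{n+2}$ lying in $S^{n+1}(|x|)$, with normal space $\nu_{x_0}M$ at $x$, and $T_xM_x=\oplus_kE_k$, $\dim E_k=m_k$, with Euclidean shape operator $A_\xi|_{E_k}=\langle\xi,-\alpha_k/\langle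 x,\alpha_k\rangle\rangle\mathrm{Id}$ ($\langle\cdot,\cdot\rangle$ the real inner product on $\mathbb{C}=\mathbb{R}^2$). $H^E(x),A^E(x)$ denote mean curvature vector and shape operator of $M_x$ at $x$ in $\mathbb{R}^{n+2}$; $H^S(x),A^S(x)$ those of $M_x$ as a hypersurface of $S^{n+1}(|x|)$; $\|A\|^2$ is the sum of squared Hilbert–Schmidt norms over an orthonormal normal basis. Set $\delta=(m_2-m_1)/(m_2+m_1)$ if $g\ge2$ and $\delta=0$ if $g=1$, and let $\theta_{\min}\in(0,\pi/g)$ be defined by $\cos g\theta_{\min}=-\delta$. *)

From Stdlib Require Import Reals List Arith.
Open Scope R_scope.

(* The normal plane nu_{x0} M identified with C = R^2. *)
Definition vec : Type := (R * R)%type.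
Definition inner (u v : vec) : R := fst u * fst v + snd u * snd v.
Definition vadd (u v : vec) : vec := (fst u + fst v, snd u + snd v).
Definition vscale (c : R) (u : vec) : vec := (c * fst u, c * snd u).
Definition vzero : vec := (0, 0).
(* multiplication by i *)
Definition rot (u : vec) : vec := (- snd u, fst u).
Definition polar (r t : R) : vec := (r * cos t, r * sin t).

Definition sumk (g : nat) (f : nat -> R) : R :=
  fold_right Rplus 0 (map f (seq 1 g)).
Definition vsumk (g : nat) (f : nat -> vec) : vec :=
  fold_right vadd vzero (map f (seq 1 g)).

Definition theta_k (g k : nat) : R := INR k * PI / INR g - PI / 2.
Definition alpha (g k : nat) : vec := polar 1 (theta_k g k).
Definition mk (m1 m2 k : nat) : nat := if Nat.odd k then m1 else m2.

Definition in_chamber (g : nat) (r theta : R) : Prop :=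
  0 < r /\ 0 < theta /\ theta < PI / INR g.

(* The curvature normal of E_k at x: A_xi|E_k = <xi, nk> Id,
   nk = - alpha_k / <x, alpha_k>. *)
Definition curv_normal (g : nat) (x : vec) (k : nat) : vec :=
  vscale (- / inner x (alpha g k)) (alpha g k).

Definition shape_eig (g : nat) (x : vec) (k : nat) (xi : vec) : R :=
  inner xi (curv_normal g x k).

(* Squared Hilbert-Schmidt norm of A_xi on T_x M_x = (+)_k E_k,
   dim E_k = m_k. *)
Definition HS_sq (g m1 m2 : nat) (x xi : vec) : R :=
  sumk g (fun k => INR (mk m1 m2 k) * (shape_eig g x k xi) ^ 2).

Definition orthonormal2 (e1 e2 : vec) : Prop :=
  inner e1 e1 = 1 /\ inner e2 e2 = 1 /\ inner e1 e2 = 0.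

Definition AE_norm_sq (g m1 m2 : nat) (x e1 e2 : vec) : R :=
  HS_sq g m1 m2 x e1 + HS_sq g m1 m2 x e2.

(* Euclidean mean curvature vector H^E(x) = (1/n) tr A, i.e. the vector
   with <H^E, xi> = (1/n) tr A_xi. *)
Definition HE (g m1 m2 n : nat) (x : vec) : vec :=
  vscale (/ INR n) (vsumk g (fun k => vscale (INR (mk m1 m2 k)) (curv_normal g x k))).

(* Mean curvature vector in the sphere S^{n+1}(|x|): the component of H^E
   tangent to the sphere, i.e. orthogonal to the position vector x. *)
Definition HS (g m1 m2 n : nat) (x : vec) : vec :=
  let h := HE g m1 m2 n x in
  vadd h (vscale (- (inner h x / inner x x)) x).

Definition minimal_in_sphere (g m1 m2 n : nat) (x : vec) : Prop :=
  HS g m1 m2 n x = vzero.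

(* Unit normal of M_x in S^{n+1}(|x|) at x: i x / |x|.  For normals tangent
   to the sphere the spherical shape operator equals the Euclidean one. *)
Definition sphere_normal (x : vec) : vec := vscale (/ sqrt (inner x x)) (rot x).

Definition AS_norm_sq (g m1 m2 : nat) (x : vec) : R :=
  HS_sq g m1 m2 x (sphere_normal x).

Definition iso_data (g m1 m2 n : nat) : Prop :=
  (g = 1 \/ g = 2 \/ g = 3 \/ g = 4 \/ g = 6)%nat /\
  (1 <= m1)%nat /\ (m1 <= m2)%nat /\
  (Nat.odd g = true -> m1 = m2) /\
  ((m1 + m2) * g = 2 * n)%nat.

(* Write phi_k = k pi / g - theta for the angle between x = r e^{i theta} and the k-th wall.
   Then <x, alpha_k> = r sin phi_k and <i x, alpha_k> = - r cos phi_k, so the curvature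
   normals have length 1 / (r sin phi_k), ||A^E||^2 = r^-2 sum m_k / sin^2 phi_k,
   ||A^S||^2 = r^-2 sum m_k cot^2 phi_k = ||A^E||^2 - n / r^2, and minimality in the sphere
   reads sum m_k cot phi_k = 0.  Walls of equal multiplicity are equally spaced with step
   pi / h (h = g for g odd, h = g / 2 for g even), and for h <= 3 the classical identities
   sum_j cot (j pi/h - c) = - h cot (h c),  sum_j 1 / sin^2 (j pi/h - c) = h^2 / sin^2 (h c)
   turn minimality into cos (g theta) = 0 (g odd) or m1 tan^2 (g theta / 2) = m2 (g even).
   In both cases sum m_k / sin^2 phi_k = n g. *)

From Stdlib Require Import Reals Lra Lia List.
Open Scope R_scope.

Definition cot (x : R) : R := cos x / sin x.

Definition wall_angle (g : nat) (theta : R) (k : nat) : R := INR k * PI / INR g - theta.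

Lemma fold_right_Rplus_init (l : list R) (a : R) :
  fold_right Rplus a l = fold_right Rplus 0 l + a.
Proof. induction l as [|y l IH]; simpl; [ring | rewrite IH; ring]. Qed.

Lemma sumk_S (g : nat) (f : nat -> R) : sumk (S g) f = sumk g f + f (S g).
Proof.
  unfold sumk. rewrite seq_S, map_app, fold_right_app; simpl.
  rewrite fold_right_Rplus_init. ring.
Qed.

Lemma sumk_ext (g : nat) (f h : nat -> R) :
  (forall k, (1 <= k <= g)%nat -> f k = h k) -> sumk g f = sumk g h.
Proof.
  induction g as [|g IH]; intros Hfh; [reflexivity|].
  rewrite !sumk_S, (Hfh (S g)) by lia.
  rewrite IH; [reflexivity |]. intros k Hk; apply Hfh; lia.
Qed.

Lemma sumk_add (g : nat) (f h : nat -> R) :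
  sumk g (fun k => f k + h k) = sumk g f + sumk g h.
Proof. induction g as [|g IH]; [cbn; ring | rewrite !sumk_S, IH; ring]. Qed.

Lemma sumk_scal (g : nat) (c : R) (f : nat -> R) :
  sumk g (fun k => c * f k) = c * sumk g f.
Proof. induction g as [|g IH]; [cbn; ring | rewrite !sumk_S, IH; ring]. Qed.

Lemma sumk_double (h : nat) (f : nat -> R) :
  sumk (2 * h) f = sumk h (fun j => f (2 * j - 1)%nat) + sumk h (fun j => f (2 * j)%nat).
Proof.
  induction h as [|h IH]; [cbn; ring|].
  replace (2 * S h)%nat with (S (S (2 * h))) by lia.
  rewrite !sumk_S, IH.
  replace (2 * S h - 1)%nat with (S (2 * h)) by lia.
  replace (2 * S h)%nat with (S (S (2 * h))) by lia.
  ring.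
Qed.

Lemma inner_comm (u v : vec) : inner u v = inner v u.
Proof. unfold inner; ring. Qed.

Lemma inner_vadd_l (u v w : vec) : inner (vadd u v) w = inner u w + inner v w.
Proof. unfold inner, vadd; simpl; ring. Qed.

Lemma inner_vscale_l (c : R) (u v : vec) : inner (vscale c u) v = c * inner u v.
Proof. unfold inner, vscale; simpl; ring. Qed.

Lemma inner_vscale_r (c : R) (u v : vec) : inner u (vscale c v) = c * inner u v.
Proof. unfold inner, vscale; simpl; ring. Qed.

Lemma inner_rot_self (x : vec) : inner x (rot x) = 0.
Proof. unfold inner, rot; simpl; ring. Qed.

Lemma inner_vsumk (g : nat) (F : nat -> vec) (v : vec) :
  inner (vsumk g F) v = sumk g (fun k => inner (F k) v).
Proof.
  unfold vsumk, sumk. induction (seq 1 g) as [|k l IH]; simpl.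
  - unfold inner, vzero; simpl; ring.
  - rewrite <- IH. unfold inner, vadd; simpl; ring.
Qed.

(* e2 = det (e1, e2) * rot e1, and det (e1, e2) ^ 2 = 1 *)
Lemma orthonormal2_sum_sq (e1 e2 v : vec) :
  orthonormal2 e1 e2 -> inner e1 v ^ 2 + inner e2 v ^ 2 = inner v v.
Proof.
  destruct e1 as [a b], e2 as [c d], v as [v1 v2].
  unfold orthonormal2, inner; simpl. intros [H1 [H2 H3]].
  assert (Hc : c = - (a * d - b * c) * b).
  { assert (E : c + (a * d - b * c) * b = c * (1 - (a * a + b * b)) + a * (a * c + b * d))
      by ring.
    rewrite H1, H3 in E. lra. }
  assert (Hd : d = (a * d - b * c) * a).
  { assert (E : d - (a * d - b * c) * a = d * (1 - (a * a + b * b)) + b * (a * c + b * d))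
      by ring.
    rewrite H1, H3 in E. lra. }
  assert (Hdet : (a * d - b * c) ^ 2 = 1).
  { replace ((a * d - b * c) ^ 2) with ((a * a + b * b) * (c * c + d * d) - (a * c + b * d) ^ 2)
      by ring.
    rewrite H1, H2, H3. ring. }
  remember (a * d - b * c) as l eqn:El. clear El. subst c d.
  transitivity ((a * a + b * b) * (v1 * v1 + v2 * v2) + (l ^ 2 - 1) * (a * v2 - b * v1) ^ 2);
    [ring | rewrite H1, Hdet; ring].
Qed.

Lemma sin_cos_sq (x : R) : sin x ^ 2 + cos x ^ 2 = 1.
Proof. rewrite <- (sin2_cos2 x); unfold Rsqr; ring. Qed.

Lemma sin_3x (x : R) : sin (3 * x) = sin x * (3 * cos x ^ 2 - sin x ^ 2).
Proof. replace (3 * x) with (2 * x + x) by ring. rewrite sin_plus, sin_2a, cos_2a. ring. Qed.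

Lemma cos_3x (x : R) : cos (3 * x) = cos x * (cos x ^ 2 - 3 * sin x ^ 2).
Proof. replace (3 * x) with (2 * x + x) by ring. rewrite cos_plus, sin_2a, cos_2a. ring. Qed.

Definition cot_csc_sum_formulas (h : nat) : Prop :=
  forall c, (forall j, (1 <= j <= h)%nat -> sin (wall_angle h c j) <> 0) ->
  sumk h (fun j => cot (wall_angle h c j)) = - INR h * cot (INR h * c) /\
  sumk h (fun j => / sin (wall_angle h c j) ^ 2) = INR h ^ 2 / sin (INR h * c) ^ 2.

Lemma cot_csc_sum_formulas_1 : cot_csc_sum_formulas 1.
Proof.
  intros c Hnz. specialize (Hnz 1%nat ltac:(lia)).
  unfold sumk; cbn [seq map fold_right]. unfold wall_angle, cot in *.
  replace (INR 1 * PI / INR 1 - c) with (PI - c) in * by (simpl; field).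
  replace (INR 1) with 1 by reflexivity.
  rewrite sin_PI_x, Rtrigo_facts.cos_pi_minus in *.
  rewrite Rmult_1_l. split; field; lra.
Qed.

Lemma cot_csc_sum_formulas_2 : cot_csc_sum_formulas 2.
Proof.
  intros c Hnz. assert (H1 := Hnz 1%nat ltac:(lia)). assert (H2 := Hnz 2%nat ltac:(lia)).
  unfold sumk; cbn [seq map fold_right]. unfold wall_angle, cot in *.
  replace (INR 1 * PI / INR 2 - c) with (PI / 2 - c) in * by (simpl; field).
  replace (INR 2 * PI / INR 2 - c) with (PI - c) in * by (simpl; field).
  replace (INR 2) with 2 by (simpl; ring).
  rewrite sin_shift, cos_shift, sin_PI_x, Rtrigo_facts.cos_pi_minus, sin_2a, cos_2a in *.
  pose proof (sin_cos_sq c) as Hp.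
  split.
  - field. lra.
  - field_simplify_eq; [lra | tauto].
Qed.

Lemma cot_csc_sum_formulas_3 : cot_csc_sum_formulas 3.
Proof.
  intros c Hnz.
  assert (H1 := Hnz 1%nat ltac:(lia)). assert (H2 := Hnz 2%nat ltac:(lia)).
  assert (H3 := Hnz 3%nat ltac:(lia)). clear Hnz.
  unfold sumk; cbn [seq map fold_right]. unfold wall_angle, cot in *.
  replace (INR 1 * PI / INR 3 - c) with (PI / 3 - c) in * by (simpl; field).
  replace (INR 2 * PI / INR 3 - c) with (2 * (PI / 3) - c) in * by (simpl; field).
  replace (INR 3 * PI / INR 3 - c) with (PI - c) in * by (simpl; field).
  replace (INR 3) with 3 by (simpl; ring).
  rewrite sin_3x, cos_3x, sin_PI_x, Rtrigo_facts.cos_pi_minus in *.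
  rewrite !sin_minus, !cos_minus, sin_PI3, cos_PI3, sin_2PI3, cos_2PI3 in *.
  pose proof (sin_cos_sq c) as Hp.
  assert (Ht : sqrt 3 * sqrt 3 = 3) by (apply sqrt_sqrt; lra).
  set (t := sqrt 3) in *. set (s := sin c) in *. set (co := cos c) in *.
  set (S1 := t / 2 * co - 1 / 2 * s) in *. set (S2 := t / 2 * co - -1 / 2 * s) in *.
  set (C1 := 1 / 2 * co + t / 2 * s) in *. set (C2 := -1 / 2 * co + t / 2 * s) in *.
  (* pairing pi/3 - c with 2 pi/3 - c leaves only t * t = 3 to use *)
  assert (Hprod : S1 * S2 = (3 * co ^ 2 - s ^ 2) / 4).
  { unfold S1, S2. rewrite <- Ht. field. }
  assert (Hcross : C1 * S2 + C2 * S1 = 2 * co * s).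
  { unfold S1, S2, C1, C2. replace (2 * co * s) with (co * s * (1 + 3) / 2) by field.
    rewrite <- Ht. field. }
  assert (Hsq : S1 ^ 2 + S2 ^ 2 = (3 * co ^ 2 + s ^ 2) / 2).
  { unfold S1, S2. rewrite <- Ht. field. }
  assert (HD : 3 * co ^ 2 - s ^ 2 <> 0).
  { intro E. apply (Rmult_integral_contrapositive_currified S1 S2 H1 H2).
    rewrite Hprod, E. field. }
  split.
  - replace (C1 / S1 + (C2 / S2 + (- co / s + 0))) with ((C1 * S2 + C2 * S1) / (S1 * S2) - co / s)
      by (field; tauto).
    rewrite Hprod, Hcross. field. tauto.
  - replace (/ S1 ^ 2 + (/ S2 ^ 2 + (/ s ^ 2 + 0)))
      with ((S1 ^ 2 + S2 ^ 2) / (S1 * S2) ^ 2 + / s ^ 2)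
      by (field; tauto).
    (* homogenise with s ^ 2 + co ^ 2 = 1 *)
    rewrite Hprod, Hsq. replace (3 ^ 2) with (9 * (s ^ 2 + co ^ 2) ^ 2) by (rewrite Hp; ring).
    field. tauto.
Qed.

Lemma sin_wall_angle_pos (g k : nat) (theta : R) :
  (1 <= k <= g)%nat -> 0 < theta -> theta < PI / INR g -> 0 < sin (wall_angle g theta k).
Proof.
  intros Hk Ht Htg.
  assert (Hg : 0 < INR g) by (apply lt_0_INR; lia).
  assert (Hk1 : 1 <= INR k) by (apply (le_INR 1); lia).
  assert (Hkg : INR k <= INR g) by (apply le_INR; lia).
  assert (E : wall_angle g theta k = INR k * (PI / INR g) - theta)
    by (unfold wall_angle; field; lra).
  assert (Hpi : PI = INR g * (PI / INR g)) by (field; lra).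
  rewrite E. apply sin_gt_0; nra.
Qed.

Lemma wall_angle_double_even (h j : nat) (theta : R) :
  (1 <= h)%nat -> wall_angle (2 * h) theta (2 * j) = wall_angle h theta j.
Proof.
  intros Hh. assert (0 < INR h) by (apply lt_0_INR; lia).
  unfold wall_angle. rewrite !mult_INR. simpl. field. lra.
Qed.

Lemma wall_angle_double_odd (h j : nat) (theta : R) :
  (1 <= h)%nat -> (1 <= j)%nat ->
  wall_angle (2 * h) theta (2 * j - 1) = wall_angle h (theta + PI / INR (2 * h)) j.
Proof.
  intros Hh Hj. assert (0 < INR h) by (apply lt_0_INR; lia).
  unfold wall_angle. rewrite minus_INR by lia. rewrite !mult_INR. simpl. field. lra.
Qed.

Lemma mk_double_odd (m1 m2 j : nat) : (1 <= j)%nat -> mk m1 m2 (2 * j - 1) = m1.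
Proof.
  intros Hj. unfold mk. replace (2 * j - 1)%nat with (2 * (j - 1) + 1)%nat by lia.
  now rewrite Nat.odd_odd.
Qed.

Lemma mk_double_even (m1 m2 j : nat) : mk m1 m2 (2 * j) = m2.
Proof. unfold mk. now rewrite Nat.odd_even. Qed.

Lemma sumk_mk_double (h m1 m2 : nat) (theta : R) (F : R -> R) :
  (1 <= h)%nat ->
  sumk (2 * h) (fun k => INR (mk m1 m2 k) * F (wall_angle (2 * h) theta k)) =
  INR m1 * sumk h (fun j => F (wall_angle h (theta + PI / INR (2 * h)) j)) +
  INR m2 * sumk h (fun j => F (wall_angle h theta j)).
Proof.
  intros Hh. rewrite sumk_double, <- !sumk_scal. f_equal; apply sumk_ext; intros j Hj.
  - rewrite mk_double_odd, wall_angle_double_odd by lia. reflexivity.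
  - rewrite mk_double_even, wall_angle_double_even by lia. reflexivity.
Qed.

Lemma sumk_mk_diag (g m : nat) (F : nat -> R) :
  sumk g (fun k => INR (mk m m k) * F k) = INR m * sumk g F.
Proof.
  rewrite <- sumk_scal. apply sumk_ext. intros k _. unfold mk. now destruct (Nat.odd k).
Qed.

Lemma balanced_weights (a b p q : R) :
  p <> 0 -> q <> 0 -> p ^ 2 + q ^ 2 = 1 -> a * (q / p) = b * (p / q) ->
  a / p ^ 2 + b / q ^ 2 = 2 * (a + b).
Proof.
  intros Hp Hq Hpq Hab.
  assert (E : a * q ^ 2 = b * p ^ 2).
  { apply (Rmult_eq_reg_r (/ (p * q)));
      [| apply Rinv_neq_0_compat, Rmult_integral_contrapositive; tauto].
    transitivity (a * (q / p)); [field; tauto |]. rewrite Hab. field. tauto. }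
  assert (Ha : a / p ^ 2 = a + b).
  { transitivity ((a * p ^ 2 + a * q ^ 2) / p ^ 2).
    - rewrite <- Rmult_plus_distr_l, Hpq. field. tauto.
    - rewrite E. field. tauto. }
  assert (Hb : b / q ^ 2 = b + a).
  { transitivity ((b * q ^ 2 + b * p ^ 2) / q ^ 2).
    - rewrite <- Rmult_plus_distr_l, Rplus_comm, Hpq. field. tauto.
    - rewrite <- E. field. tauto. }
  rewrite Ha, Hb. ring.
Qed.

Lemma csc_sum_equal_weights (g m : nat) (theta : R) :
  cot_csc_sum_formulas g -> (1 <= g)%nat -> 0 < theta -> theta < PI / INR g ->
  sumk g (fun k => INR (mk m m k) * cot (wall_angle g theta k)) = 0 ->
  sumk g (fun k => INR (mk m m k) * / sin (wall_angle g theta k) ^ 2) = INR m * INR g ^ 2.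
Proof.
  intros Hformulas Hg Ht Htg Hcot.
  assert (HgR : 0 < INR g) by (apply lt_0_INR; lia).
  destruct (Hformulas theta) as [Ecot Ecsc].
  { intros j Hj. apply Rgt_not_eq, sin_wall_angle_pos; assumption. }
  assert (Hs : 0 < sin (INR g * theta)).
  { apply sin_gt_0; [nra |]. apply (Rmult_lt_reg_r (/ INR g)); [apply Rinv_0_lt_compat; lra |].
    replace (INR g * theta * / INR g) with theta by (field; lra). exact Htg. }
  rewrite sumk_mk_diag in Hcot |- *. rewrite Ecot in Hcot. rewrite Ecsc.
  set (v := INR g * theta) in *. unfold cot in Hcot.
  (* minimality forces cos (g theta) = 0 unless m = 0 *)
  assert (Hmc : INR m * cos v = 0).
  { replace (INR m * cos v) with (- (INR m * (- INR g * (cos v / sin v))) * sin v / INR g)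
      by (field; lra).
    rewrite Hcot. field. lra. }
  replace (INR m * (INR g ^ 2 / sin v ^ 2))
    with (INR m * INR g ^ 2 * (sin v ^ 2 + cos v ^ 2) / sin v ^ 2)
    by (rewrite sin_cos_sq; field; lra).
  replace (INR m * INR g ^ 2 * (sin v ^ 2 + cos v ^ 2))
    with (INR m * INR g ^ 2 * sin v ^ 2 + INR g ^ 2 * cos v * (INR m * cos v)) by ring.
  rewrite Hmc. field. lra.
Qed.

Lemma csc_sum_two_weights (g h m1 m2 : nat) (theta : R) :
  g = (2 * h)%nat -> cot_csc_sum_formulas h -> (1 <= h)%nat -> 0 < theta -> theta < PI / INR g ->
  sumk g (fun k => INR (mk m1 m2 k) * cot (wall_angle g theta k)) = 0 ->
  sumk g (fun k => INR (mk m1 m2 k) * / sin (wall_angle g theta k) ^ 2)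
    = 2 * INR h ^ 2 * (INR m1 + INR m2).
Proof.
  intros -> Hformulas Hh Ht Htg Hcot.
  assert (HhR : 0 < INR h) by (apply lt_0_INR; lia).
  assert (Hsin : forall j, (1 <= j <= h)%nat ->
    sin (wall_angle h (theta + PI / INR (2 * h)) j) <> 0 /\ sin (wall_angle h theta j) <> 0).
  { intros j Hj. rewrite <- wall_angle_double_odd, <- (wall_angle_double_even h j) by lia.
    split; apply Rgt_not_eq, sin_wall_angle_pos; auto; lia. }
  destruct (Hformulas (theta + PI / INR (2 * h))) as [Ecot1 Ecsc1]; [apply Hsin |].
  destruct (Hformulas theta) as [Ecot2 Ecsc2]; [apply Hsin |].
  rewrite (sumk_mk_double h m1 m2 theta cot Hh), Ecot1, Ecot2 in Hcot.
  rewrite (sumk_mk_double h m1 m2 theta (fun x => / sin x ^ 2) Hh), Ecsc1, Ecsc2.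
  (* the odd walls sit a quarter period pi/(2h) further: h (theta + pi/(2h)) = h theta + pi/2 *)
  set (u := INR h * theta) in *.
  replace (INR h * (theta + PI / INR (2 * h))) with (PI / 2 - - u) in *
    by (unfold u; rewrite mult_INR; simpl; field; lra).
  unfold cot in Hcot. rewrite sin_shift, cos_shift, sin_neg, cos_neg in *.
  assert (Hu : 0 < u < PI / 2).
  { unfold u. rewrite mult_INR in Htg. simpl in Htg. split; [nra |].
    apply (Rmult_lt_reg_r (/ INR h)); [apply Rinv_0_lt_compat; lra |].
    replace (INR h * theta * / INR h) with theta by (field; lra).
    replace (PI / 2 * / INR h) with (PI / ((1 + 1) * INR h)) by (field; lra). exact Htg. }
  assert (Hc : 0 < cos u) by (apply cos_gt_0; lra).
  assert (Hs : 0 < sin u) by (apply sin_gt_0; lra).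
  assert (Hbal : INR m1 * (sin u / cos u) = INR m2 * (cos u / sin u)).
  { apply (Rmult_eq_reg_l (INR h)); [| lra].
    replace (INR m1 * (- INR h * (- sin u / cos u)) + INR m2 * (- INR h * (cos u / sin u))) with
      (INR h * (INR m1 * (sin u / cos u)) - INR h * (INR m2 * (cos u / sin u))) in Hcot
      by (field; split; lra). lra. }
  pose proof (balanced_weights (INR m1) (INR m2) (cos u) (sin u)) as Hw.
  rewrite Rplus_comm, sin_cos_sq in Hw.
  transitivity (INR h ^ 2 * (INR m1 / cos u ^ 2 + INR m2 / sin u ^ 2)); [field; lra |].
  rewrite Hw by (lra || exact Hbal). ring.
Qed.

Lemma iso_data_INR (g m1 m2 n : nat) :
  iso_data g m1 m2 n -> (INR m1 + INR m2) * INR g = 2 * INR n.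
Proof.
  intros (_ & _ & _ & _ & Hn). apply (f_equal INR) in Hn.
  rewrite !mult_INR, plus_INR in Hn. exact Hn.
Qed.

Lemma iso_data_n_pos (g m1 m2 n : nat) : iso_data g m1 m2 n -> 0 < INR n.
Proof.
  intros (Hg & Hm1 & _ & _ & Hn). apply lt_0_INR.
  destruct Hg as [-> | [-> | [-> | [-> | ->]]]]; lia.
Qed.

Lemma sumk_mk_iso_data (g m1 m2 n : nat) :
  iso_data g m1 m2 n -> sumk g (fun k => INR (mk m1 m2 k)) = INR n.
Proof.
  intros Hiso. pose proof (iso_data_INR _ _ _ _ Hiso) as HN.
  destruct Hiso as (Hg & _ & _ & Hodd & _).
  destruct Hg as [-> | [-> | [-> | [-> | ->]]]];
    try (rewrite Hodd in * by reflexivity);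
    unfold sumk, mk; cbn [seq map fold_right Nat.odd Nat.even negb INR] in *; lra.
Qed.

Lemma csc_sum_of_cot_sum (g m1 m2 n : nat) (theta : R) :
  iso_data g m1 m2 n -> 0 < theta -> theta < PI / INR g ->
  sumk g (fun k => INR (mk m1 m2 k) * cot (wall_angle g theta k)) = 0 ->
  sumk g (fun k => INR (mk m1 m2 k) * / sin (wall_angle g theta k) ^ 2) = INR n * INR g.
Proof.
  intros Hiso Ht Htg Hcot. pose proof (iso_data_INR _ _ _ _ Hiso) as HN.
  destruct Hiso as (Hg & _ & _ & Hodd & _).
  destruct Hg as [-> | [-> | [-> | [-> | ->]]]].
  - rewrite Hodd in * by reflexivity.
    rewrite (csc_sum_equal_weights 1 m2 theta cot_csc_sum_formulas_1) by (auto; lia).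
    simpl in *. lra.
  - rewrite (csc_sum_two_weights 2 1 m1 m2 theta) by (auto using cot_csc_sum_formulas_1).
    simpl in *. lra.
  - rewrite Hodd in * by reflexivity.
    rewrite (csc_sum_equal_weights 3 m2 theta cot_csc_sum_formulas_3) by (auto; lia).
    simpl in *. lra.
  - rewrite (csc_sum_two_weights 4 2 m1 m2 theta) by (auto using cot_csc_sum_formulas_2).
    simpl in *. lra.
  - rewrite (csc_sum_two_weights 6 3 m1 m2 theta) by (auto using cot_csc_sum_formulas_3).
    simpl in *. lra.
Qed.

Lemma HS_sq_orthonormal2 (g m1 m2 : nat) (x e1 e2 : vec) :
  orthonormal2 e1 e2 ->
  HS_sq g m1 m2 x e1 + HS_sq g m1 m2 x e2 =
  sumk g (fun k => INR (mk m1 m2 k) * inner (curv_normal g x k) (curv_normal g x k)).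
Proof.
  intros He. unfold HS_sq. rewrite <- sumk_add. apply sumk_ext. intros k _.
  unfold shape_eig. rewrite <- (orthonormal2_sum_sq e1 e2) by exact He. ring.
Qed.

Lemma minimal_in_sphere_sumk_rot (g m1 m2 n : nat) (x : vec) :
  minimal_in_sphere g m1 m2 n x -> INR n <> 0 ->
  sumk g (fun k => INR (mk m1 m2 k) * inner (curv_normal g x k) (rot x)) = 0.
Proof.
  unfold minimal_in_sphere, HS. intros Hmin Hn.
  apply (f_equal (fun v => inner v (rot x))) in Hmin.
  rewrite inner_vadd_l, inner_vscale_l, inner_rot_self in Hmin.
  replace (inner vzero (rot x)) with 0 in Hmin by (unfold inner; simpl; ring).
  rewrite Rmult_0_r, Rplus_0_r in Hmin.
  unfold HE in Hmin. rewrite inner_vscale_l, inner_vsumk in Hmin.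
  rewrite (sumk_ext g _ (fun k => INR (mk m1 m2 k) * inner (curv_normal g x k) (rot x))) in Hmin
    by (intros; apply inner_vscale_l).
  apply Rmult_integral in Hmin as [Hinv | Hsum]; [| lra].
  exfalso. apply (Rinv_neq_0_compat _ Hn). lra.
Qed.

Lemma inner_polar_alpha (g k : nat) (r theta : R) :
  inner (polar r theta) (alpha g k) = r * sin (wall_angle g theta k).
Proof.
  unfold inner, polar, alpha, theta_k, wall_angle; simpl.
  rewrite sin_minus, cos_minus, sin_minus, cos_PI2, sin_PI2. ring.
Qed.

Lemma inner_rot_polar_alpha (g k : nat) (r theta : R) :
  inner (rot (polar r theta)) (alpha g k) = - r * cos (wall_angle g theta k).
Proof.
  unfold inner, rot, polar, alpha, theta_k, wall_angle; simpl.
  rewrite cos_minus, cos_minus, sin_minus, cos_PI2, sin_PI2. ring.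
Qed.

Lemma inner_alpha_alpha (g k : nat) : inner (alpha g k) (alpha g k) = 1.
Proof.
  unfold inner, alpha, polar; simpl.
  transitivity (sin (theta_k g k) ^ 2 + cos (theta_k g k) ^ 2); [ring | apply sin_cos_sq].
Qed.

Lemma sqrt_inner_polar (r theta : R) :
  0 <= r -> sqrt (inner (polar r theta) (polar r theta)) = r.
Proof.
  intros Hr. replace (inner (polar r theta) (polar r theta)) with (r ^ 2).
  - apply sqrt_pow2, Hr.
  - transitivity (r ^ 2 * (sin theta ^ 2 + cos theta ^ 2)).
    + rewrite sin_cos_sq. ring.
    + unfold inner, polar; simpl. ring.
Qed.

Section Chamber.

Variables (g m1 m2 : nat) (r theta : R).
Hypothesis Hr : 0 < r.
Hypothesis Hsin : forall k, (1 <= k <= g)%nat -> sin (wall_angle g theta k) <> 0.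

Lemma curv_normal_polar_rot (k : nat) : (1 <= k <= g)%nat ->
  inner (curv_normal g (polar r theta) k) (rot (polar r theta)) = cot (wall_angle g theta k).
Proof.
  intros Hk. specialize (Hsin k Hk). unfold curv_normal, cot.
  rewrite inner_vscale_l, (inner_comm (alpha g k)), inner_rot_polar_alpha, inner_polar_alpha.
  field. split; lra.
Qed.

Lemma curv_normal_polar_norm_sq (k : nat) : (1 <= k <= g)%nat ->
  inner (curv_normal g (polar r theta) k) (curv_normal g (polar r theta) k)
    = / r ^ 2 * / sin (wall_angle g theta k) ^ 2.
Proof.
  intros Hk. specialize (Hsin k Hk). unfold curv_normal.
  rewrite inner_vscale_l, inner_vscale_r, inner_alpha_alpha, inner_polar_alpha.
  field. split; lra.
Qed.

Lemma AE_norm_sq_polar (e1 e2 : vec) : orthonormal2 e1 e2 ->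
  AE_norm_sq g m1 m2 (polar r theta) e1 e2
    = / r ^ 2 * sumk g (fun k => INR (mk m1 m2 k) * / sin (wall_angle g theta k) ^ 2).
Proof.
  intros He. unfold AE_norm_sq. rewrite HS_sq_orthonormal2 by exact He.
  rewrite <- sumk_scal. apply sumk_ext. intros k Hk.
  rewrite curv_normal_polar_norm_sq by exact Hk. ring.
Qed.

Lemma AS_norm_sq_polar :
  AS_norm_sq g m1 m2 (polar r theta)
    = / r ^ 2 * sumk g (fun k => INR (mk m1 m2 k) * cot (wall_angle g theta k) ^ 2).
Proof.
  unfold AS_norm_sq, HS_sq. rewrite <- sumk_scal. apply sumk_ext. intros k Hk.
  unfold shape_eig, sphere_normal.
  rewrite inner_vscale_l, (inner_comm (rot _)), sqrt_inner_polar, curv_normal_polar_rot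
    by (lra || exact Hk).
  field. lra.
Qed.

Lemma minimal_polar_cot_sum (n : nat) :
  minimal_in_sphere g m1 m2 n (polar r theta) -> INR n <> 0 ->
  sumk g (fun k => INR (mk m1 m2 k) * cot (wall_angle g theta k)) = 0.
Proof.
  intros Hmin Hn. rewrite <- (minimal_in_sphere_sumk_rot g m1 m2 n _ Hmin Hn).
  apply sumk_ext. intros k Hk. rewrite curv_normal_polar_rot by exact Hk. reflexivity.
Qed.

End Chamber.

Lemma sumk_cot_sq (g m1 m2 : nat) (theta : R) :
  (forall k, (1 <= k <= g)%nat -> sin (wall_angle g theta k) <> 0) ->
  sumk g (fun k => INR (mk m1 m2 k) * cot (wall_angle g theta k) ^ 2)
    = sumk g (fun k => INR (mk m1 m2 k) * / sin (wall_angle g theta k) ^ 2)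
      - sumk g (fun k => INR (mk m1 m2 k)).
Proof.
  intros Hsin.
  enough (E : sumk g (fun k => INR (mk m1 m2 k) * cot (wall_angle g theta k) ^ 2)
              + sumk g (fun k => INR (mk m1 m2 k))
              = sumk g (fun k => INR (mk m1 m2 k) * / sin (wall_angle g theta k) ^ 2)) by lra.
  rewrite <- sumk_add. apply sumk_ext. intros k Hk. specialize (Hsin k Hk). unfold cot.
  field_simplify_eq; [| exact Hsin].
  rewrite <- Rmult_plus_distr_l, Rplus_comm, sin_cos_sq. ring.
Qed.

Theorem corollary4p8 (g m1 m2 n : nat) (r theta : R) :
  iso_data g m1 m2 n ->
  in_chamber g r theta ->
  minimal_in_sphere g m1 m2 n (polar r theta) ->
  (forall e1 e2 : vec, orthonormal2 e1 e2 ->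
     AE_norm_sq g m1 m2 (polar r theta) e1 e2 = INR n * INR g / r ^ 2) /\
  AS_norm_sq g m1 m2 (polar r theta) = INR n / r ^ 2 * (INR g - 1).
Proof.
  intros Hiso (Hr & Ht & Htg) Hmin.
  assert (Hsin : forall k, (1 <= k <= g)%nat -> sin (wall_angle g theta k) <> 0)
    by (intros k Hk; apply Rgt_not_eq, sin_wall_angle_pos; assumption).
  assert (Hn := iso_data_n_pos g m1 m2 n Hiso).
  assert (Hcsc := csc_sum_of_cot_sum g m1 m2 n theta Hiso Ht Htg
                    (minimal_polar_cot_sum g m1 m2 r theta Hr Hsin n Hmin (Rgt_not_eq _ _ Hn))).
  split.
  - intros e1 e2 He. rewrite AE_norm_sq_polar, Hcsc by assumption. field. lra.
  - rewrite AS_norm_sq_polar, sumk_cot_sq, Hcsc, (sumk_mk_iso_data g m1 m2 n Hiso) by assumption.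
    field. lra.
Qed.
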